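(* Let $N=2$, $J=1$, $h_0=[0,1]^{\sf T}$, $h_1=[\cos\tau,\sin\tau]^{\sf T}$ with $\tau\in(-\pi/2,\pi/2)$, $\sigma_0^2,\sigma_1^2,\sigma_n^2>0$, and $c_1\in[-\sigma_0\sigma_1,\sigma_0\sigma_1]$. Then for every $\lambda\ge0$, \[ w_{\rm RZF}(\lambda)=\begin{bmatrix}-\dfrac{\cos\tau\,[(\sigma_1^2+\lambda)\sin\tau+c_1]}{(\sigma_1^2+\lambda)\cos^2\tau+\sigma_n^2}\\[2mm] 1\end{bmatrix}, \] and \[ \mathrm{MSE}(\lambda)=\frac{\delta^2(\sigma_1^2\cos^2\tau+\sigma_n^2)}{g(\lambda)^2}-\frac{2\sigma_n^2\delta\tan\tau}{g(\lambda)}+\sigma_n^2(\tan^2\tau+1), \] where $\delta:=\sigma_n^2\tan\tau-c_1\cos\tau$ and $g(\lambda):=\lambda\cos^2\tau+\sigma_1^2\cos^2\tau+\sigma_n^2>0$. Furthermore: (i) if $\delta=0$, then $\mathrm{MSE}(\lambda)=\sigma_n^2(\tan^2\tau+1)$ for all $\lambda\ge0$; (ii) if $\delta\neq0$ and $\gamma:=\sigma_n^2\tan\tau/\delta\le0$, then $\mathrm{MSE}(\lambda)$ is decreasing on $[0,\infty)$ and $\inf_{\lambda\ge0}\mathrm{MSE}(\lambda)=\lim_{\lambda\to\infty}\mathrm{MSE}(\lambda)$ (the zero-forcing limit); (iii) if $\delta\ne0$ and $\gamma>0$, then $\mathrm{MSE}$ is minimized over $[0,\infty)$ by $\lambda=-\dfrac{c_1(\sigma_1^2\cos^2\tau+\sigma_n^2)}{\sigma_n^2\sin\tau}>0$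 when $\gamma\in(0,1)$, and by $\lambda=0$ when $\gamma\ge1$.
   Context: Real-valued single-interference model: $y(k)=s_0(k)h_0+s_1(k)h_1+n(k)\in\mathbb{R}^N$, with real zero-mean jointly weakly stationary signals $s_0,s_1$, $\sigma_j^2:=E[s_j(k)^2]$, $c_1:=E[s_0(k)s_1(k)]$, and real zero-mean noise $n(k)\sim\mathcal{N}(0,\sigma_n^2I)$ uncorrelated with the signals. $R:=E[y(k)y(k)^{\sf T}]$. For $\lambda\ge0$, $R_\lambda:=R+\lambda h_1h_1^{\sf T}$ and the RZF beamformer is $w_{\rm RZF}(\lambda):=R_\lambda^{-1}h_0/(h_0^{\sf T}R_\lambda^{-1}h_0)$. The MSE of a beamformer $w$ is $J_{\rm MSE}(w):=E[(w^{\sf T}y(k)-s_0(k))^2]$, and $\mathrm{MSE}(\lambda):=J_{\rm MSE}(w_{\rm RZF}(\lambda))$. *)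

From HB Require Import structures.
From mathcomp Require Import all_boot all_order all_algebra.
From mathcomp Require Import all_classical all_reals all_analysis.
Set Implicit Arguments. Unset Strict Implicit. Unset Printing Implicit Defensive.
Import Order.TTheory GRing.Theory Num.Theory.
Local Open Scope ring_scope.

Section Beamforming.
Variable R : realType.
Variable N : nat.

(* Second-order statistics of the single-interference model
   y(k) = s0(k) h0 + s1(k) h1 + n(k):  sig0, sig1, sign are standard
   deviations (so sigma_j^2 = sig_j ^+ 2), c1 = E[s0 s1].
   R := E[y y^T] = sig0^2 h0 h0^T + sig1^2 h1 h1^T + c1 (h0 h1^T + h1 h0^T) + sign^2 I. *)
Definition Rcov (h0 h1 : 'cV[R]_N) (sig0 sig1 sign c1 : R) : 'M[R]_N :=
  sig0 ^+ 2 *: (h0 *m h0^T) + sig1 ^+ 2 *: (h1 *m h1^T)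
  + c1 *: (h0 *m h1^T + h1 *m h0^T) + sign ^+ 2 *: 1%:M.

Definition Rlam (h0 h1 : 'cV[R]_N) (sig0 sig1 sign c1 lam : R) : 'M[R]_N :=
  Rcov h0 h1 sig0 sig1 sign c1 + lam *: (h1 *m h1^T).

Definition wRZF (Rl : 'M[R]_N) (h0 : 'cV[R]_N) : 'cV[R]_N :=
  ((h0^T *m invmx Rl *m h0) 0 0)^-1 *: (invmx Rl *m h0).

(* J_MSE(w) := E[(w^T y - s0)^2]
             = w^T R w - 2 w^T E[y s0] + E[s0^2],
   with E[y s0] = sig0^2 h0 + c1 h1. *)
Definition Jmse (h0 h1 : 'cV[R]_N) (sig0 sig1 sign c1 : R) (w : 'cV[R]_N) : R :=
  (w^T *m Rcov h0 h1 sig0 sig1 sign c1 *m w) 0 0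
  - 2 * (w^T *m (sig0 ^+ 2 *: h0 + c1 *: h1)) 0 0 + sig0 ^+ 2.

Definition MSE (h0 h1 : 'cV[R]_N) (sig0 sig1 sign c1 lam : R) : R :=
  Jmse h0 h1 sig0 sig1 sign c1 (wRZF (Rlam h0 h1 sig0 sig1 sign c1 lam) h0).

End Beamforming.

Definition vec2 (R : realType) (a b : R) : 'cV[R]_2 :=
  \col_(i < 2) (if i == ord0 then a else b).

From HB Require Import structures.
From mathcomp Require Import all_boot all_order all_algebra.
From mathcomp Require Import all_classical all_reals all_analysis.
From mathcomp Require Import ring lra.
Import Order.TTheory GRing.Theory Num.Theory numFieldNormedType.Exports.
Local Open Scope classical_set_scope.
Local Open Scope ring_scope.

(* Write c = cos tau, s = sin tau, t = tan tau.  Since h0 = e2, the RZF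
   beamformer is R_lambda^-1 e2 rescaled to have second entry 1, so it is
   [x; 1] with x read off the first row of R_lambda; and the MSE of [x; 1] is
   sigma_1^2 (c x + s)^2 + sigma_n^2 (x^2 + 1).  Substituting x, the MSE becomes
   the quadratic A u^2 - 2 B u + L in u = 1 / g(lambda), with A = delta^2 g(0),
   B = sigma_n^2 delta t = gamma delta^2 and L = sigma_n^2 (t^2 + 1), the
   zero-forcing MSE.  As lambda runs over [0, oo), u decreases from 1 / g(0)
   to 0, and the vertex of the parabola sits at B / A = gamma / g(0): left of
   the range when gamma <= 0, inside it (at lambda_opt) when 0 < gamma < 1,
   and right of it when gamma >= 1. *)

Section Quadratic.
Context {R : realFieldType}.
Implicit Types a b l u w : R.

Definition quad a b l u := a * u ^+ 2 - 2 * b * u + l.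

Lemma quadB a b l u w :
  quad a b l u - quad a b l w = (u - w) * (a * (u + w) - 2 * b).
Proof. by rewrite /quad; ring. Qed.

Lemma quad_ge_const a b l u : 0 <= a -> b <= 0 -> 0 <= u -> l <= quad a b l u.
Proof. by move=> a_ge0 b_le0 u_ge0; rewrite /quad; nra. Qed.

Lemma quad_lt_ge0 a b l u w :
  0 < a -> b <= 0 -> 0 <= u -> u < w -> quad a b l u < quad a b l w.
Proof.
move=> a_gt0 b_le0 u_ge0 uw.
have auw_gt0 : 0 < a * (u + w) by rewrite mulr_gt0 //; lra.
by rewrite -subr_lt0 quadB pmulr_llt0 ?subr_lt0 //; lra.
Qed.

Lemma quad_vertex_le a b l u : 0 < a -> quad a b l (b / a) <= quad a b l u.
Proof.
move=> a_gt0; rewrite -subr_ge0.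
have -> : quad a b l u - quad a b l (b / a) = a * (u - b / a) ^+ 2.
  by rewrite /quad; field; rewrite gt_eqF.
by rewrite mulr_ge0 ?sqr_ge0 ?ltW.
Qed.

Lemma quad_le_left_vertex a b l u w :
  0 <= a -> u <= w -> a * w <= b -> quad a b l w <= quad a b l u.
Proof.
move=> a_ge0 uw awb; rewrite -subr_ge0 quadB mulr_le0 ?subr_le0 //.
by have := ler_wpM2l a_ge0 uw; lra.
Qed.

Lemma cvg_quad T (F : set_system T) {FF : Filter F} (f : T -> R) a b l u :
  f x @[x --> F] --> u -> quad a b l (f x) @[x --> F] --> quad a b l u.
Proof.
move=> fu; apply: cvgD; last exact: cvg_cst.
apply: cvgB; apply: cvgM; try exact: cvg_cst; last exact: fu.
by under eq_fun do rewrite expr2; apply: cvgM.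
Qed.

Lemma cvgry_inv_affine a b : 0 < a -> (x * a + b)^-1 @[x --> +oo] --> (0 : R).
Proof.
move=> a_gt0; apply/gtr0_cvgV0.
  by exists (- b / a); split => [|x]; [exact: num_real | rewrite ltr_pdivrMr //; lra].
apply/cvgryPge => M; exists ((M - b) / a); split; first exact: num_real.
by move=> x; rewrite ltr_pdivrMr // => Mx; lra.
Qed.
End Quadratic.

Lemma lbound_cvgry_inf (R : realType) (f : R -> R) l :
  f x @[x --> +oo] --> l -> (forall x, 0 <= x -> l <= f x) ->
  l = inf [set f x | x in [set x : R | 0 <= x]].
Proof.
move=> fl l_lb; apply/le_anti/andP; split.
  apply: lb_le_inf; first by exists (f 0); exists 0 => //=.
  by move=> _ [x x_ge0 <-]; apply: l_lb.
apply: (cvgr_to_ge fl); exists 0; split => // x /ltW x_ge0.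
apply: ge_inf; last by exists x.
by exists l => _ [y y_ge0 <-]; apply: l_lb.
Qed.

Section TwoByTwo.
Variable R : comPzRingType.

Lemma ord2_cases (i : 'I_2) : i = 0 \/ i = 1.
Proof. by case: i => [[|[|//]] lti]; [left | right]; apply: val_inj. Qed.

Lemma sum_ord2 (F : 'I_2 -> R) : \sum_(i < 2) F i = F 0 + F 1.
Proof. by rewrite big_ord_recr big_ord1; congr (F _ + F _); apply: val_inj. Qed.

Lemma mulmx2E m n (A : 'M[R]_(m, 2)) (B : 'M[R]_(2, n)) i j :
  (A *m B) i j = A i 0 * B 0 j + A i 1 * B 1 j.
Proof. by rewrite mxE sum_ord2. Qed.

Lemma det_mx2 (A : 'M[R]_2) : \det A = A 0 0 * A 1 1 - A 0 1 * A 1 0.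
Proof.
rewrite (expand_det_row _ 0) sum_ord2 /cofactor !det_mx11 !mxE /=.
have -> : lift 0 0 = 1 :> 'I_2 by apply: val_inj.
have -> : lift 1 0 = 0 :> 'I_2 by apply: val_inj.
by rewrite expr0 expr1; ring.
Qed.

Lemma col2P (v w : 'cV[R]_2) : v 0 0 = w 0 0 -> v 1 0 = w 1 0 -> v = w.
Proof. by move=> e0 e1; apply/colP => i; case: (ord2_cases i) => ->. Qed.
End TwoByTwo.

Lemma Rlam0 (R : realType) N (h0 h1 : 'cV[R]_N) sig0 sig1 sign c1 :
  Rlam h0 h1 sig0 sig1 sign c1 0 = Rcov h0 h1 sig0 sig1 sign c1.
Proof. by rewrite /Rlam scale0r addr0. Qed.

Lemma wRZF_e2 (R : realType) (A : 'M[R]_2) :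
  \det A != 0 -> A 0 0 != 0 -> wRZF A (vec2 0 1) = vec2 (- A 0 1 / A 0 0) 1.
Proof.
move=> detA A00; rewrite /wRZF -mulmxA.
set v := invmx A *m vec2 0 1.
have Av : A *m v = vec2 0 1 by rewrite mulKVmx // unitmxE unitfE.
clearbody v.
have eq0 : A 0 0 * v 0 0 + A 0 1 * v 1 0 = 0 by rewrite -mulmx2E Av mxE.
have eq1 : A 1 0 * v 0 0 + A 1 1 * v 1 0 = 1 by rewrite -mulmx2E Av mxE.
have v1 : v 1 0 != 0.
  apply/eqP => v10; move: eq0 eq1; rewrite v10 !mulr0 !addr0 => /eqP.
  rewrite mulf_eq0 (negbTE A00) /= => /eqP ->.
  by rewrite mulr0 => /eqP; rewrite eq_sym oner_eq0.
have -> : ((vec2 0 1)^T *m v) 0 0 = v 1 0 by rewrite mulmx2E !mxE /=; ring.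
apply: col2P; rewrite !mxE /= ?mulVf //.
have -> : v 0 0 = - A 0 1 * v 1 0 / A 0 0.
  by apply: (mulfI A00); rewrite mulrCA mulfV // mulr1; lra.
by field; apply/andP.
Qed.

Section SingleInterference.
Variables (R : realType) (c s sig0 sig1 sign c1 : R).
Implicit Types lam x y : R.

Let h0 : 'cV[R]_2 := vec2 0 1.
Let h1 := vec2 c s.

Lemma Rlam_vec2E lam (M := Rlam h0 h1 sig0 sig1 sign c1 lam) :
  [/\ M 0 0 = (sig1 ^+ 2 + lam) * c ^+ 2 + sign ^+ 2,
      M 0 1 = (sig1 ^+ 2 + lam) * c * s + c1 * c,
      M 1 0 = (sig1 ^+ 2 + lam) * c * s + c1 * c
    & M 1 1 = sig0 ^+ 2 + (sig1 ^+ 2 + lam) * s ^+ 2 + 2 * c1 * s + sign ^+ 2].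
Proof. by rewrite /M /Rlam /Rcov; split; rewrite !mxE !big_ord1 !mxE /=; ring. Qed.

Lemma Jmse_vec2 x : Jmse h0 h1 sig0 sig1 sign c1 (vec2 x 1) =
  sig1 ^+ 2 * (c * x + s) ^+ 2 + sign ^+ 2 * (x ^+ 2 + 1).
Proof.
rewrite /Jmse -Rlam0 !mulmx2E.
have [-> -> -> ->] := Rlam_vec2E 0.
by rewrite !mxE /=; ring.
Qed.

Hypotheses (c_gt0 : 0 < c) (cs : c ^+ 2 + s ^+ 2 = 1).
Hypotheses (sig1_gt0 : 0 < sig1) (sign_gt0 : 0 < sign).
Hypothesis c1_bound : - (sig0 * sig1) <= c1 <= sig0 * sig1.

Lemma c1_sqr_le : c1 ^+ 2 <= (sig0 * sig1) ^+ 2.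
Proof. by case/andP: c1_bound => ? ?; nra. Qed.

Lemma signal_var_ge0 : 0 <= sig1 ^+ 2 * s ^+ 2 + 2 * c1 * s + sig0 ^+ 2.
Proof.
have c1_sq := c1_sqr_le.
rewrite -(pmulr_rge0 _ (exprn_gt0 2 sig1_gt0)).
have -> : sig1 ^+ 2 * (sig1 ^+ 2 * s ^+ 2 + 2 * c1 * s + sig0 ^+ 2) =
          (sig1 ^+ 2 * s + c1) ^+ 2 + ((sig0 * sig1) ^+ 2 - c1 ^+ 2) by ring.
by rewrite addr_ge0 ?sqr_ge0 ?subr_ge0.
Qed.

Lemma det_Rlam_gt0 lam : 0 <= lam -> 0 < \det (Rlam h0 h1 sig0 sig1 sign c1 lam).
Proof.
move=> lam_ge0; rewrite det_mx2; have [-> -> -> ->] := Rlam_vec2E lam.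
set a := sig1 ^+ 2 + lam.
have -> : (a * c ^+ 2 + sign ^+ 2) * (sig0 ^+ 2 + a * s ^+ 2 + 2 * c1 * s + sign ^+ 2)
          - (a * c * s + c1 * c) * (a * c * s + c1 * c) =
          c ^+ 2 * (a * sig0 ^+ 2 - c1 ^+ 2)
          + sign ^+ 2 * (a * (c ^+ 2 + s ^+ 2) + sig0 ^+ 2 + 2 * c1 * s + sign ^+ 2).
  by ring.
rewrite cs mulr1 ltr_pwDr //.
  rewrite mulr_gt0 ?exprn_gt0 //.
  have := signal_var_ge0; have : sig1 ^+ 2 * s ^+ 2 <= a.
    have s_sqr_le1 : s ^+ 2 <= 1 by rewrite -cs lerDr sqr_ge0.
    by rewrite /a; nra.
  by have := exprn_gt0 2 sign_gt0; lra.
rewrite mulr_ge0 ?sqr_ge0 // subr_ge0.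
by have := c1_sqr_le; rewrite /a; nra.
Qed.

Lemma wRZF_Rlam lam : 0 <= lam ->
  wRZF (Rlam h0 h1 sig0 sig1 sign c1 lam) h0 =
  vec2 (- (c * ((sig1 ^+ 2 + lam) * s + c1)) / ((sig1 ^+ 2 + lam) * c ^+ 2 + sign ^+ 2)) 1.
Proof.
move=> lam_ge0; have [M00 M01 _ _] := Rlam_vec2E lam.
have M00_gt0 : 0 < (sig1 ^+ 2 + lam) * c ^+ 2 + sign ^+ 2.
  by rewrite ltr_wpDl ?exprn_gt0 // mulr_ge0 ?sqr_ge0 // addr_ge0 ?sqr_ge0.
rewrite wRZF_e2 ?M00 ?M01 ?gt_eqF ?det_Rlam_gt0 //.
by congr (vec2 (- _ / _) 1); ring.
Qed.

Let t := s / c.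
Let K := sig1 ^+ 2 * c ^+ 2 + sign ^+ 2.
Let gain lam := lam * c ^+ 2 + sig1 ^+ 2 * c ^+ 2 + sign ^+ 2.
Let delta := sign ^+ 2 * t - c1 * c.
Let gamma := sign ^+ 2 * t / delta.
Let mse lam := MSE h0 h1 sig0 sig1 sign c1 lam.
Let mse_zf := sign ^+ 2 * (t ^+ 2 + 1).
Let a_mse := delta ^+ 2 * K.
Let b_mse := sign ^+ 2 * delta * t.
Let lamopt := - (c1 * K) / (sign ^+ 2 * s).

Lemma gainE lam : gain lam = lam * c ^+ 2 + K.
Proof. by rewrite /gain /K addrA. Qed.

Lemma gain0 : gain 0 = K.
Proof. by rewrite gainE mul0r add0r. Qed.

Lemma gain_gt0 lam : 0 <= lam -> 0 < gain lam.
Proof.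
move=> lam_ge0; rewrite /gain ltr_wpDl ?exprn_gt0 //.
by apply: addr_ge0; apply: mulr_ge0; rewrite ?sqr_ge0.
Qed.

Lemma K_gt0 : 0 < K.
Proof. by rewrite -gain0 gain_gt0. Qed.

Lemma mse_closed_form lam : 0 <= lam ->
  mse lam = delta ^+ 2 * K / gain lam ^+ 2 - 2 * sign ^+ 2 * delta * t / gain lam + mse_zf.
Proof.
move=> lam_ge0; have g_neq0 : gain lam != 0 by rewrite gt_eqF ?gain_gt0.
rewrite /mse /MSE wRZF_Rlam // Jmse_vec2 /mse_zf /delta /t /K /gain; field.
by rewrite exprMn -/(gain lam) g_neq0 gt_eqF.
Qed.

Lemma mse_quad lam : 0 <= lam -> mse lam = quad a_mse b_mse mse_zf (gain lam)^-1.
Proof.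
move=> lam_ge0; rewrite mse_closed_form // /quad /a_mse /b_mse.
by field; rewrite gt_eqF ?gain_gt0.
Qed.

Lemma mse_delta0 : delta = 0 -> forall lam, 0 <= lam -> mse lam = mse_zf.
Proof. by move=> delta0 lam lam_ge0; rewrite mse_quad // /quad /a_mse /b_mse delta0; ring. Qed.

Lemma a_mse_ge0 : 0 <= a_mse.
Proof. by rewrite mulr_ge0 ?sqr_ge0 ?ltW ?K_gt0. Qed.

Lemma a_mse_gt0 : delta != 0 -> 0 < a_mse.
Proof. by move=> delta_neq0; rewrite mulr_gt0 ?exprn_even_gt0 ?K_gt0. Qed.

Lemma b_mseE : delta != 0 -> b_mse = gamma * delta ^+ 2.
Proof. by move=> delta_neq0; rewrite /b_mse /gamma; field. Qed.

Lemma b_mse_le0 : gamma <= 0 -> b_mse <= 0.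
Proof.
have [delta0 _|delta_neq0] := eqVneq delta 0; first by rewrite /b_mse delta0 mulr0 mul0r.
by rewrite b_mseE // => gamma_le0; rewrite mulr_le0_ge0 ?sqr_ge0.
Qed.

Lemma mse_cvgry : mse x @[x --> +oo] --> mse_zf.
Proof.
have -> : mse_zf = quad a_mse b_mse mse_zf 0 by rewrite /quad; ring.
have mse_near : \forall x \near +oo, quad a_mse b_mse mse_zf (x * c ^+ 2 + K)^-1 = mse x.
  by exists 0; split => // x /ltW x_ge0; rewrite mse_quad // gainE.
apply: cvg_trans (near_eq_cvg mse_near) _.
by apply: cvg_quad; apply: cvgry_inv_affine; rewrite exprn_gt0.
Qed.

Lemma mse_ge_zf : gamma <= 0 -> forall lam, 0 <= lam -> mse_zf <= mse lam.
Proof.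
move=> gamma_le0 lam lam_ge0; rewrite mse_quad //.
by apply: quad_ge_const; rewrite ?a_mse_ge0 ?b_mse_le0 // invr_ge0 ltW ?gain_gt0.
Qed.

Lemma mse_decreasing : delta != 0 -> gamma <= 0 ->
  forall x y, 0 <= x -> x < y -> mse y < mse x.
Proof.
move=> delta_neq0 gamma_le0 x y x_ge0 xy; have y_ge0 := le_trans x_ge0 (ltW xy).
rewrite !mse_quad //; apply: quad_lt_ge0; rewrite ?a_mse_gt0 ?b_mse_le0 //.
  by rewrite invr_ge0 ltW ?gain_gt0.
by rewrite ltf_pV2 ?posrE ?gain_gt0 // !gainE ltrD2r ltr_pM2r ?exprn_gt0.
Qed.

Lemma s_neq0 : gamma != 0 -> s != 0.
Proof. by apply: contraNneq => s0; rewrite /gamma /t s0 !mul0r mulr0 mul0r. Qed.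

Lemma gain_lamopt : delta != 0 -> s != 0 -> gain lamopt * gamma = K.
Proof.
move=> delta_neq0 s_neq0; move: delta_neq0.
rewrite /gamma /delta /lamopt /t gainE => delta_neq0.
have c_neq0 : c != 0 by rewrite gt_eqF.
field; rewrite c_neq0 s_neq0 (gt_eqF sign_gt0) /= andbT.
have -> : sign ^+ 2 * s + - (c1 * c) * c = c * (sign ^+ 2 * (s / c) - c1 * c) by field.
by rewrite mulf_neq0.
Qed.

Lemma lamopt_gt0 : delta != 0 -> 0 < gamma < 1 -> 0 < lamopt.
Proof.
move=> delta_neq0 /andP[gamma_gt0 gamma_lt1].
have := gain_lamopt delta_neq0 (s_neq0 (lt0r_neq0 gamma_gt0)).
rewrite gainE => gainK.
have : K < lamopt * c ^+ 2 + K by rewrite -gainK; have := K_gt0; nra.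
by rewrite ltrDr pmulr_lgt0 ?exprn_gt0.
Qed.

Lemma mse_lamopt_le : delta != 0 -> 0 < gamma < 1 ->
  forall lam, 0 <= lam -> mse lamopt <= mse lam.
Proof.
move=> delta_neq0 gamma01 lam lam_ge0.
have [gamma_gt0 _] := andP gamma01.
have gainK := gain_lamopt delta_neq0 (s_neq0 (lt0r_neq0 gamma_gt0)).
have lamopt_ge0 := ltW (lamopt_gt0 delta_neq0 gamma01).
have gain_neq0 : gain lamopt != 0 by rewrite gt_eqF ?gain_gt0.
rewrite !mse_quad //.
have -> : (gain lamopt)^-1 = b_mse / a_mse.
  by rewrite b_mseE // /a_mse -gainK; field; rewrite delta_neq0 gain_neq0 gt_eqF.
exact: quad_vertex_le (a_mse_gt0 delta_neq0).
Qed.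

Lemma mse0_le : delta != 0 -> 1 <= gamma -> forall lam, 0 <= lam -> mse 0 <= mse lam.
Proof.
move=> delta_neq0 gamma_ge1 lam lam_ge0; rewrite !mse_quad //.
apply: quad_le_left_vertex; first exact: a_mse_ge0.
  by rewrite lef_pV2 ?posrE ?gain_gt0 // !gainE lerD2r mul0r mulr_ge0 ?sqr_ge0.
rewrite gain0 /a_mse mulfK ?gt_eqF ?K_gt0 // b_mseE //.
by rewrite ler_peMl ?sqr_ge0.
Qed.

End SingleInterference.

Theorem lemma2 (R : realType) (tau sig0 sig1 sign c1 : R) :
  - (pi / 2) < tau < pi / 2 ->
  0 < sig0 -> 0 < sig1 -> 0 < sign ->
  - (sig0 * sig1) <= c1 <= sig0 * sig1 ->
  let h0 := vec2 0 1 in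
  let h1 := vec2 (cos tau) (sin tau) in
  let mse := fun lam => MSE h0 h1 sig0 sig1 sign c1 lam in
  let delta := sign ^+ 2 * tan tau - c1 * cos tau in
  let g := fun lam => lam * cos tau ^+ 2 + sig1 ^+ 2 * cos tau ^+ 2 + sign ^+ 2 in
  let gamma := sign ^+ 2 * tan tau / delta in
  (forall lam, 0 <= lam ->
     [/\ wRZF (Rlam h0 h1 sig0 sig1 sign c1 lam) h0 =
           vec2 (- (cos tau * ((sig1 ^+ 2 + lam) * sin tau + c1))
                  / ((sig1 ^+ 2 + lam) * cos tau ^+ 2 + sign ^+ 2)) 1,
         mse lam = delta ^+ 2 * (sig1 ^+ 2 * cos tau ^+ 2 + sign ^+ 2) / g lam ^+ 2
                   - 2 * sign ^+ 2 * delta * tan tau / g lam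
                   + sign ^+ 2 * (tan tau ^+ 2 + 1)
       & 0 < g lam]) /\
  (delta = 0 -> forall lam, 0 <= lam -> mse lam = sign ^+ 2 * (tan tau ^+ 2 + 1)) /\
  (delta != 0 -> gamma <= 0 ->
     (forall x y, 0 <= x -> x < y -> mse y < mse x) /\
     exists l : R, (mse x @[x --> +oo%R] --> (l : R^o)) /\
                   l = inf [set mse x | x in [set x : R | 0 <= x]]) /\
  (delta != 0 -> 0 < gamma < 1 ->
     let lamopt := - (c1 * (sig1 ^+ 2 * cos tau ^+ 2 + sign ^+ 2)) / (sign ^+ 2 * sin tau) in
     0 < lamopt /\ forall lam, 0 <= lam -> mse lamopt <= mse lam) /\
  (delta != 0 -> 1 <= gamma -> forall lam, 0 <= lam -> mse 0 <= mse lam).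
Proof.
move=> /andP[tau_gt tau_lt] _ sig1_gt0 sign_gt0 c1_bound h0 h1 mse delta g gamma.
have c_gt0 : 0 < cos tau by apply: cos_gt0_pihalf; apply/andP.
have cs := cos2Dsin2 tau.
split.
  move=> lam lam_ge0; split.
  - exact: wRZF_Rlam.
  - exact: mse_closed_form.
  - exact: gain_gt0.
split; first exact: mse_delta0.
split.
  move=> delta_neq0 gamma_le0; split; first exact: mse_decreasing.
  exists (sign ^+ 2 * (tan tau ^+ 2 + 1)); split; first exact: mse_cvgry.
  by apply: lbound_cvgry_inf; [exact: mse_cvgry | exact: mse_ge_zf].
split.
  move=> delta_neq0 gamma01 lamopt; split; [exact: lamopt_gt0 | exact: mse_lamopt_le].
exact: mse0_le.
Qed.
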